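(* Let $G$ be a finite group and $p$ the smallest prime divisor of $|G|$. Then every non-nilpotent subgroup of $G$ is a TI-subgroup of $G$ or subnormal in $G$ or has $p'$-order if and only if every non-nilpotent subgroup of $G$ of order divisible by $p$ is subnormal in $G$.
   Context: All groups are finite. A subgroup $H$ of a group $G$ is a TI-subgroup of $G$ if for every $g\in G$, $H^g\cap H=1$ or $H^g\cap H=H$. A subgroup has $p'$-order if its order is not divisible by $p$. *)

From mathcomp Require Import all_boot all_fingroup all_solvable.
Set Implicit Arguments. Unset Strict Implicit. Unset Printing Implicit Defensive.
Local Open Scope group_scope.

Definition TI_subgroup (gT : finGroupType) (H G : {set gT}) : Prop :=
  forall g, g \in G -> (H :^ g :&: H = 1) \/ (H :^ g :&: H = H).

From mathcomp Require Import all_boot all_fingroup all_solvable ssralg all_character zify.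

(* For the direct implication argue by induction on
   |G|: a non-nilpotent H with p | |H| lies in a maximal subgroup M with the same
   properties, and H is subnormal in M by induction, so it suffices that M is
   subnormal in G. Otherwise M is a self-normalizing TI-subgroup, hence a
   Frobenius complement, with kernel K say. For X <= M with p | |X| the group KX
   is not nilpotent, so it is TI or subnormal in G; a TI-subgroup containing the
   nontrivial normal subgroup K is normal, so KX, and then X = KX :&: M, are
   subnormal. As a Frobenius complement M contains no Z_p x Z_p. Since p is the
   smallest prime divisor of |M|, these facts make M nilpotent: its Sylow
   p-subgroup is normal, the centre of the latter contains a normal, hence central,
   subgroup <z> of order p, and every subgroup Y of M is then subnormal via Y<z>.
   This contradicts the choice of M. *)

Set Implicit Arguments. Unset Strict Implicit. Unset Printing Implicit Defensive.
Import GRing.Theory FiniteModule.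
Local Open Scope group_scope.

Section FixedPointFreeAction.
Variables (gT : finGroupType) (V : {group gT}) (abV : abelian V).

Lemma fixpoint_free_norm_eq0 (a : gT) (n : nat) (u : fmod_of abV) :
  a \in 'N(V) -> a ^+ n = 1 -> 'C_V[a] = 1 ->
  (\sum_(i < n) u ^@ (a ^+ i) = 0)%R.
Proof.
move=> nVa an1 cVa; set S := (\sum_(i < n) _)%R.
have Sa : (S ^@ a = S)%R.
  rewrite /S actr_sum; under eq_bigr => i _ do rewrite -actrM ?groupX // -expgSr.
  case: n an1 {S} => [|n] an1; first by rewrite !big_ord0.
  by rewrite big_ord_recr /= an1 [in RHS]big_ord_recl addrC.
apply: fmod_inj; rewrite fmval0.
suff: val S \in 'C_V[a] by rewrite cVa => /set1P.
rewrite inE fmodP; apply/cent1P/commgP/conjg_fixP.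
by rewrite -fmvalJ // Sa.
Qed.

(* The norm u |-> \sum_(i < p) u ^@ a ^+ i vanishes for every a in A^# with
   a ^+ p = 1. Summing the norms of the y x^j over j gives p u plus, for each
   0 < k < p, the norm of x^k at u ^@ y^k. *)
Lemma semiregular_pp_exponent (A : {group gT}) (x y : gT) (p : nat) :
  semiregular V A -> A \subset 'N(V) -> x \in A -> y \in A -> commute x y ->
  #[x] = p -> y ^+ p = 1 -> y \notin <[x]> -> {in V, forall v, v ^+ p = 1}.
Proof.
move=> srVA nVA Ax Ay cxy ox yp1 yNx.
have cVa a : a \in A -> a != 1 -> 'C_V[a] = 1.
  by move=> Aa nta; apply: srVA; rewrite !inE nta.
have xXp1 i : (x ^+ i) ^+ p = 1 by rewrite -expgM mulnC expgM -ox expg_order expg1n.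
have pu0 (u : fmod_of abV) : (u *+ p = 0)%R.
  have yxj_norm0 j : (\sum_(k < p) u ^@ ((y * x ^+ j) ^+ k) = 0)%R.
    apply: fixpoint_free_norm_eq0; first by rewrite (subsetP nVA) ?groupM ?groupX.
      by rewrite expgMn ?yp1 ?xXp1 ?mulg1 //; exact: commuteX.
    apply: cVa; first by rewrite groupM ?groupX.
    apply: contra yNx => /eqP yx1.
    by rewrite -(mulgK (x ^+ j) y) yx1 mul1g groupV mem_cycle.
  have : (\sum_(j < p) \sum_(k < p) u ^@ ((y * x ^+ j) ^+ k) = 0)%R by rewrite big1.
  case: p ox yp1 xXp1 {yxj_norm0} => [|p] ox yp1 xXp1; first by rewrite mulr0n.
  under eq_bigr => j _ do rewrite big_ord_recl expg0 actr1.
  rewrite big_split /= sumr_const card_ord exchange_big /= big1 ?addr0 // => k _.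
  set m := bump 0 k; have nVx := subsetP nVA x Ax.
  have -> : (\sum_(j < p.+1) u ^@ ((y * x ^+ j) ^+ m)
             = \sum_(j < p.+1) (u ^@ y ^+ m) ^@ (x ^+ m) ^+ j)%R.
    apply: eq_bigr => j _; rewrite expgMn; last exact: commuteX.
    by rewrite -expgM mulnC expgM actrM ?groupX ?(subsetP nVA).
  apply: fixpoint_free_norm_eq0; rewrite ?groupX //.
  by apply: cVa; rewrite ?groupX // -order_dvdn ox gtnNdvd // ltnS ltn_ord.
move=> v Vv; have := congr1 val (pu0 (fmod abV v)).
by rewrite fmvalZ fmodK.
Qed.

End FixedPointFreeAction.

Lemma semiregular_pp_trivg (gT : finGroupType) (K A : {group gT}) (x y : gT) (p : nat) :
  semiregular K A -> A \subset 'N(K) -> x \in A -> y \in A -> commute x y ->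
  #[x] = p -> #[y] = p -> y \notin <[x]> -> K :=: 1.
Proof.
move=> srKA nKA Ax Ay cxy ox oy yNx.
have coKA := regular_norm_coprime nKA srKA.
apply/eqP/negPn/negP => ntK.
pose B := (<[x]> <*> <[y]>)%G.
have sBA : B \subset A by rewrite join_subG !cycle_subG Ax Ay.
have abB : abelian B.
  by rewrite abelianY !cycle_abelian cycle_subG /= cent_cycle; apply/cent1P.
have [Q sylQ nQB] := sol_coprime_Sylow_exists (pdiv #|K|) (abelian_sol abB)
   (subset_trans sBA nKA) (coprimegS sBA coKA).
have ntQ : Q :!=: 1.
  by rewrite -cardG_gt1 (card_Hall sylQ) p_part_gt1 pi_pdiv cardG_gt1.
have sVK : 'Z(Q) \subset K := subset_trans (center_sub Q) (pHall_sub sylQ).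
have ntV : 'Z(Q) != 1 by rewrite center_nil_eq1 // (pgroup_nil (pHall_pgroup sylQ)).
have nVB : B \subset 'N('Z(Q)) := char_norm_trans (center_char Q) nQB.
have xB : x \in B by rewrite (subsetP (joing_subl _ _)) ?cycle_id.
have yB : y \in B by rewrite (subsetP (joing_subr _ _)) ?cycle_id.
(* Z(Q), for a B-invariant Sylow subgroup Q of K, has exponent p but order
   coprime to p. *)
have Vp1 := semiregular_pp_exponent (center_abelian Q) (semiregularS sVK sBA srKA) nVB
  xB yB cxy ox (etrans (congr1 _ (esym oy)) (expg_order y)) yNx.
case/trivgPn: ntV => v Vv /negP[]; rewrite -order_eq1.
have: coprime #[v] #[v].
  apply: coprime_dvdl (dvdn_trans (order_dvdG Vv) (cardSg sVK)) _.
  apply: coprime_dvdr _ coKA; apply: dvdn_trans (order_dvdG Ax).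
  by rewrite ox order_dvdn Vp1.
by rewrite /coprime gcdnn.
Qed.

Section SubnormalSylow.
Variable gT : finGroupType.
Implicit Types (M S : {group gT}) (p : nat).

Lemma Sylow_subnormal_normal p M S : p.-Sylow(M) S -> S <|<| M -> S <| M.
Proof.
elim: {M}_.+1 {-2}M (ltnSn #|M|) => // n IHn M leMn sylS snS.
have [->|[K [snSK nsKM prKM]]] := subnormalEr snS; first exact: normal_refl.
have sylSK : p.-Sylow(K) S := pHall_subl (subnormal_sub snSK) (proper_sub prKM) sylS.
have nsSK : S <| K by apply: IHn sylSK snSK; apply: leq_trans (proper_card prKM) _.
by rewrite -(normal_Hall_pcore sylSK nsSK) (char_normal_trans (pcore_char _ _)).
Qed.

Lemma subnormal_Sylows_nilpotent M :
  (forall p S, p.-Sylow(M) S -> S <|<| M) -> nilpotent M.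
Proof.
move=> snSyl; apply: nilpotentS (Fitting_nil M).
rewrite -{1}(Sylow_gen M) gen_subG; apply/bigcupsP => S /SylowP[p _ sylS].
apply: Fitting_max; first exact: Sylow_subnormal_normal sylS (snSyl p S sylS).
exact: pgroup_nil (pHall_pgroup sylS).
Qed.

End SubnormalSylow.

Lemma norm_prime_cycle_cent (gT : finGroupType) (M : {group gT}) (z : gT) (p : nat) :
  prime p -> #[z] = p -> (forall r, prime r -> r %| #|M| -> p <= r) ->
  M \subset 'N(<[z]>) -> M \subset 'C(<[z]>).
Proof.
move=> p_pr oz minp nzM.
have dvd_index_Aut : #|M : 'C_M(<[z]>)| %| p.-1.
  have <- : #|conj_aut <[z]> @* M| = #|M : 'C_M(<[z]>)|.
    by rewrite card_morphim ker_conj_aut (setIidPr nzM) indexgI.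
  have := cardSg (Aut_conj_aut <[z]> M).
  by rewrite card_Aut_cyclic ?cycle_cyclic // -/#[z] oz totient_prime.
suff: #|M : 'C_M(<[z]>)| == 1%N by rewrite indexg_eq1 subsetI subxx.
rewrite eqn_leq indexg_gt0 andbT leqNgt; apply/negP => /pdiv_prime r_pr.
have p_gt1 := prime_gt1 p_pr.
have le_p_r := minp _ r_pr (dvdn_trans (pdiv_dvd _) (dvdn_indexg _ _)).
have le_r_p1 : pdiv #|M : 'C_M(<[z]>)| <= p.-1.
  by apply: dvdn_leq (dvdn_trans (pdiv_dvd _) dvd_index_Aut); rewrite -subn1 subn_gt0.
by move: le_p_r le_r_p1; rewrite -subn1; lia.
Qed.

Lemma min_prime_subnormal_nilpotent (gT : finGroupType) (M : {group gT}) (p : nat) :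
    prime p -> p %| #|M| -> (forall r, prime r -> r %| #|M| -> p <= r) ->
    (forall X : {group gT}, X \subset M -> p %| #|X| -> X <|<| M) ->
    (forall x y, x \in M -> y \in M -> commute x y -> #[x] = p -> #[y] = p ->
       y \in <[x]>) ->
  nilpotent M.
Proof.
move=> p_pr pM minp snX uniq_p.
have [P sylP] := Sylow_exists p M; have pP := pHall_pgroup sylP.
have ntP : P :!=: 1.
  by rewrite -cardG_gt1 (card_Hall sylP) p_part_gt1 mem_primes p_pr cardG_gt0.
have nsPM : P <| M.
  have [_ pdP _] := pgroup_pdiv pP ntP.
  exact: Sylow_subnormal_normal sylP (snX P (pHall_sub sylP) pdP).
have ntZ : 'Z(P) != 1 by rewrite center_nil_eq1 // (pgroup_nil pP).
have [_ pdZ _] := pgroup_pdiv (pgroupS (center_sub P) pP) ntZ.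
have [z Zz oz] := Cauchy p_pr pdZ.
have nsZM : 'Z(P) <| M := char_normal_trans (center_char P) nsPM.
have Mz : z \in M := subsetP (normal_sub nsZM) z Zz.
have nzM : M \subset 'N(<[z]>).
  apply/subsetP => m Mm.
  have Zzm : z ^ m \in 'Z(P) by rewrite memJ_norm ?(subsetP (normal_norm nsZM)).
  have czzm : commute z (z ^ m) by apply: (centsP (center_abelian P)).
  rewrite inE -cycleJ cycle_subG uniq_p ?(subsetP (normal_sub nsZM)) ?orderJ //.
have czM := norm_prime_cycle_cent p_pr oz minp nzM.
apply: subnormal_Sylows_nilpotent => r S /pHall_sub sSM.
have sSzM : S <*> <[z]> \subset M by rewrite join_subG sSM cycle_subG.
apply: subnormal_trans (snX (S <*> <[z]>)%G sSzM _).
  apply: normal_subnormal; rewrite /normal joing_subl join_subG normG /=.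
  by rewrite cents_norm // centsC (subset_trans sSM czM).
by rewrite -oz (dvdn_trans (order_dvdG (cycle_id z))) ?cardSg ?joing_subr.
Qed.

Section TISubgroups.
Variable gT : finGroupType.
Implicit Types G K L M : {group gT}.

Lemma TI_subgroupS G L M : L \subset G -> TI_subgroup M G -> TI_subgroup M L.
Proof. by move=> sLG tiM g Lg; apply/tiM/(subsetP sLG). Qed.

Lemma conjIg_id_norm (A : {set gT}) g : A :^ g :&: A = A -> g \in 'N(A).
Proof.
move=> eqAgA; have /eqP eqAAg : A == A :^ g.
  by rewrite eqEcard -{1}eqAgA subsetIl cardJg leqnn.
by rewrite inE -eqAAg.
Qed.

Lemma TI_subgroup_normal G K L :
  L \subset G -> TI_subgroup L G -> K <| G -> K \subset L -> K :!=: 1 -> L <| G.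
Proof.
move=> sLG tiL nsKG sKL ntK; rewrite /normal sLG; apply/subsetP => g Gg.
case: (tiL g Gg) => [tiLg | /conjIg_id_norm //].
have sKLg : K \subset L :^ g.
  by rewrite -(normP (subsetP (normal_norm nsKG) g Gg)) conjSg.
by case/eqP: ntK; apply/trivgP; rewrite -tiLg subsetI sKLg.
Qed.

Lemma TI_self_normalizing_Frobenius G M :
  M \proper G -> M :!=: 1 -> 'N_G(M) = M -> TI_subgroup M G ->
  [Frobenius G with complement M].
Proof.
move=> prMG ntM nMG tiM; rewrite /Frobenius_group_with_complement proper_neq //=.
apply/normedTI_P; split; first by rewrite setD_eq0 subG1.
  by rewrite normD1 subsetI proper_sub // normG.
move=> g Gg /pred0Pn[a /andP[/setD1P[nta Ma] /=]].
rewrite conjD1g => /setD1P[_ Mga]; rewrite -nMG inE Gg.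
case: (tiM g Gg) => [tiMg | /conjIg_id_norm //].
have: a \in M :^ g :&: M by rewrite inE Mga Ma.
by rewrite tiMg inE (negPf nta).
Qed.

End TISubgroups.

Lemma Frobenius_ker_join_nonnilpotent (gT : finGroupType) (G K M X : {group gT}) :
  [Frobenius G = K ><| M] -> X \subset M -> X :!=: 1 -> ~~ nilpotent (K <*> X).
Proof.
move=> frobG sXM ntX; apply/negP => nilKX.
have [defG ntK _ _ prMG] := Frobenius_context frobG.
have [nsKG _ _ _ _] := sdprod_context defG.
have nsK_KX : K <| K <*> X.
  apply: (normalS (joing_subl _ _) _ nsKG).
  by rewrite join_subG (normal_sub nsKG) (subset_trans sXM (proper_sub prMG)).
have /trivgPn[k /setIP[Kk /setIP[_ cKXk]] ntk] := meet_center_nil nilKX nsK_KX ntK.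
have [x Xx ntx] := trivgPn _ ntX.
have: k \in 'C_K[x].
  rewrite inE Kk; apply/cent1P; apply: (centP cKXk).
  by rewrite mem_gen ?inE ?Xx ?orbT.
by rewrite (Frobenius_reg_ker frobG) ?inE ?ntx ?(subsetP sXM) // (negPf ntk).
Qed.

Definition nonnil_TI_subnormal_or_p' (gT : finGroupType) (G : {group gT}) (p : nat) :=
  forall H : {group gT}, H \subset G -> ~~ nilpotent H ->
    [\/ TI_subgroup H G, H <|<| G | ~~ (p %| #|H|)].

Lemma nonnil_TI_subnormal_or_p'S (gT : finGroupType) (G L : {group gT}) (p : nat) :
  L \subset G -> nonnil_TI_subnormal_or_p' G p -> nonnil_TI_subnormal_or_p' L p.
Proof.
move=> sLG hypG H sHL nnH.
case: (hypG H (subset_trans sHL sLG) nnH) => [tiH | snH | p'H].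
- by apply: Or31; apply: TI_subgroupS tiH.
- by apply: Or32; rewrite -(setIidPl sHL); apply: setI_subnormal sLG snH.
- exact: Or33.
Qed.

Section FrobeniusComplement.
Variables (gT : finGroupType) (G K M : {group gT}) (p : nat).
Hypotheses (p_pr : prime p) (hypG : nonnil_TI_subnormal_or_p' G p).
Hypothesis frobG : [Frobenius G = K ><| M].

Lemma Frobenius_compl_subnormal (X : {group gT}) :
  X \subset M -> p %| #|X| -> X <|<| M.
Proof.
move=> sXM pX; have [defG ntK _ _ prMG] := Frobenius_context frobG.
have [nsKG _ _ nKM tiKM] := sdprod_context defG.
have sKXG : K <*> X \subset G.
  by rewrite join_subG (normal_sub nsKG) (subset_trans sXM (proper_sub prMG)).
have ntX : X :!=: 1.
  by apply: contraTneq pX => ->; rewrite cards1 dvdn1 eqn_leq leqNgt prime_gt1.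
have pKX : p %| #|K <*> X| := dvdn_trans pX (cardSg (joing_subr _ _)).
have snKX : K <*> X <|<| G.
  case: (hypG sKXG (Frobenius_ker_join_nonnilpotent frobG sXM ntX)) => // [tiKX|].
    exact/normal_subnormal/(TI_subgroup_normal sKXG tiKX nsKG (joing_subl _ _) ntK).
  by rewrite pKX.
have := setI_subnormal (proper_sub prMG) snKX.
rewrite /= norm_joinEr ?(subset_trans sXM nKM) // setIC -group_modr //.
by rewrite setIC tiKM mul1g.
Qed.

Lemma Frobenius_compl_nilpotent :
  (forall r, prime r -> r %| #|G| -> p <= r) -> p %| #|M| -> nilpotent M.
Proof.
move=> minp pM; have [defG ntK _ _ prMG] := Frobenius_context frobG.
have [_ _ _ nKM _] := sdprod_context defG.
apply: min_prime_subnormal_nilpotent p_pr pM _ Frobenius_compl_subnormal _.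
  by move=> r r_pr /(dvdn_trans)/(_ (cardSg (proper_sub prMG))); apply: minp.
move=> x y Mx My cxy ox oy; apply: contraR ntK => yNx; apply/eqP.
exact: semiregular_pp_trivg (Frobenius_reg_ker frobG) nKM Mx My cxy ox oy yNx.
Qed.

End FrobeniusComplement.

Lemma maximal_nonnilpotent_subnormal (gT : finGroupType) (G M : {group gT}) (p : nat) :
    prime p -> (forall r, prime r -> r %| #|G| -> p <= r) ->
    nonnil_TI_subnormal_or_p' G p ->
  maximal M G -> ~~ nilpotent M -> p %| #|M| -> M <|<| G.
Proof.
move=> p_pr minp hypG /maxgroupP[prMG maxMG] nnM pM; have sMG := proper_sub prMG.
apply/idPn => nsnM.
have tiM : TI_subgroup M G.
  by case: (hypG M sMG nnM) => // [snM | p'M]; [rewrite snM in nsnM | rewrite pM in p'M].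
have nMG : 'N_G(M) = M.
  apply: maxMG; last by rewrite subsetI sMG normG.
  rewrite properEneq subsetIl andbT; apply: contraNneq nsnM => nMG.
  by apply/normal_subnormal; rewrite /normal sMG -nMG subsetIr.
have ntM : M :!=: 1 by apply: contraNneq nnM => ->; apply: nilpotent1.
have [K frobG] := Frobenius_kernel_exists (TI_self_normalizing_Frobenius prMG ntM nMG tiM).
by case/negP: nnM; apply: Frobenius_compl_nilpotent p_pr hypG frobG minp pM.
Qed.

Lemma nonnil_TI_subnormal_or_p'_subnormal (gT : finGroupType) (G H : {group gT}) (p : nat) :
    prime p -> (forall r, prime r -> r %| #|G| -> p <= r) ->
    nonnil_TI_subnormal_or_p' G p ->
  H \subset G -> ~~ nilpotent H -> p %| #|H| -> H <|<| G.
Proof.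
move=> p_pr; elim: {G}_.+1 {-2}G (ltnSn #|G|) => // n IHn G leGn minp hypG sHG nnH pH.
have [-> | [M maxM sHM]] := maximal_exists sHG; first exact: subnormal_refl.
have sMG := proper_sub (maxgroupp maxM).
have nnM : ~~ nilpotent M by apply: contra nnH; apply: nilpotentS.
have pM : p %| #|M| := dvdn_trans pH (cardSg sHM).
apply: subnormal_trans (maximal_nonnilpotent_subnormal p_pr minp hypG maxM nnM pM).
apply: IHn (nonnil_TI_subnormal_or_p'S sMG hypG) sHM nnH pH.
  exact: leq_trans (proper_card (maxgroupp maxM)) leGn.
by move=> r r_pr rM; apply: minp r_pr (dvdn_trans rM (cardSg sMG)).
Qed.

Theorem corollary1p3 (gT : finGroupType) (G : {group gT}) :
  let p := pdiv #|G| in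
  (forall H : {group gT}, H \subset G -> ~~ nilpotent H ->
     [\/ TI_subgroup H G, H <|<| G | ~~ (p %| #|H|)%N])
  <->
  (forall H : {group gT}, H \subset G -> ~~ nilpotent H ->
     (p %| #|H|)%N -> H <|<| G).
Proof.
move=> p; split => [hypG H sHG nnH pH | snG H sHG nnH].
  have ntG : 1 < #|G|.
    rewrite cardG_gt1; apply: contraNneq nnH => G1.
    by rewrite (nilpotentS sHG) // G1 nilpotent1.
  apply: nonnil_TI_subnormal_or_p'_subnormal (pdiv_prime ntG) _ hypG sHG nnH pH.
  by move=> r r_pr; apply: pdiv_min_dvd (prime_gt1 r_pr).
by have [pH | p'H] := boolP (p %| #|H|); [apply: Or32; apply: snG | apply: Or33].
Qed.
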